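(* For every positive integer $n$, $$\frac{n^2(n^2-1)}{6}\ \Big|\ \sum_{k=0}^{n-1}k(k+1)(8k+9)T_kT_{k+1}.$$
   Context: For $n\in\mathbb{N}$, the central trinomial coefficient $T_n$ is the constant term of $(1+x+x^{-1})^n$, i.e. $T_n=\sum_{k=0}^{\lfloor n/2\rfloor}\binom{n}{2k}\binom{2k}{k}$. Divisibility $a\mid m$ for integers means $m=ac$ for some integer $c$ (so $0\mid m$ means $m=0$). *)

From mathcomp Require Import all_boot.
Set Implicit Arguments. Unset Strict Implicit. Unset Printing Implicit Defensive.

Definition T (n : nat) : nat :=
  \sum_(0 <= k < n./2.+1) 'C(n, k.*2) * 'C(k.*2, k).

From mathcomp Require Import all_boot all_algebra.
From mathcomp Require Import ring zify.
Import GRing.Theory.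

(* The central trinomial coefficients satisfy the recurrence
   (n+2) T(n+2) = (2n+3) T(n+1) + 3(n+1) T(n), obtained by summing an identity
   between the terms C(n,2k) C(2k,k), and they are odd since C(2k,k) is even
   for k > 0.  The recurrence telescopes the sum:
   24 sumT n = n^2 E(n, T n, T(n-1)) for an explicit quadratic form E
   (sum_form).  In the coordinates
   T n - T(n-1) = 2(n-1) w(n-1) and T n + 3 T(n-1) = 2(n+1) w(n), where the
   integers w come from the recurrence and the oddness of T, one gets
   2 E = 4 (n^2 - 1) H(n, w(n-1), w(n)) (H = reduced_form), and H is even
   because (n+1) w(n) - (n-1) w(n-1) = 2 T(n-1). *)

Definition trinom (n k : nat) : nat := 'C(n, k.*2) * 'C(k.*2, k).

Lemma trinom_small n k : n < k.*2 -> trinom n k = 0.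
Proof. by move=> lt_n_2k; rewrite /trinom bin_small. Qed.

Lemma bin_mid_sym k : 'C(k.*2.+1, k.+1) = 'C(k.*2.+1, k).
Proof. by rewrite -[in LHS](_ : k.*2.+1 - k = k.+1) ?bin_sub //; lia. Qed.

Lemma bin_mid_double k : 'C(k.+1.*2, k.+1) = 2 * 'C(k.*2.+1, k).
Proof. by rewrite doubleS binS bin_mid_sym addnn -mul2n. Qed.

Lemma mul_bin_mid k : k.+1 * 'C(k.+1.*2, k.+1) = 2 * k.*2.+1 * 'C(k.*2, k).
Proof. by rewrite bin_mid_double mulnCA -bin_mid_sym -mul_bin_diag mulnA. Qed.

Lemma trinom_succl n k : (n.+1 - k.*2) * trinom n.+1 k = n.+1 * trinom n k.
Proof. by rewrite /trinom !mulnA -mul_bin_down. Qed.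

Lemma trinom_succr n k :
  k.+1 ^ 2 * trinom n k.+1 = (n - k.*2) * (n - k.*2).-1 * trinom n k.
Proof.
have bin_n : k.*2.+2 * k.*2.+1 * 'C(n, k.*2.+2) =
             (n - k.*2) * (n - k.*2).-1 * 'C(n, k.*2).
  rewrite mulnAC (mul_bin_left n k.*2.+1) -mulnA [_ * k.*2.+1]mulnC.
  by rewrite (mul_bin_left n k.*2) subnS mulnCA mulnA.
have bin_mid : k.+1 * k.+1 * 'C(k.*2.+2, k.+1) = k.*2.+2 * k.*2.+1 * 'C(k.*2, k).
  by rewrite -mulnA -doubleS mul_bin_mid -!muln2; ring.
rewrite /trinom doubleS.
transitivity ('C(n, k.*2.+2) * (k.+1 * k.+1 * 'C(k.*2.+2, k.+1))); first ring.
rewrite bin_mid.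
transitivity (k.*2.+2 * k.*2.+1 * 'C(n, k.*2.+2) * 'C(k.*2, k)); first ring.
by rewrite bin_n; ring.
Qed.

Lemma trinom_rec n k :
  n.+2 * trinom n.+2 k.+1 + n.+1 * trinom n k.+1 =
  (2 * n + 3) * trinom n.+1 k.+1 + 4 * n.+1 * trinom n k.
Proof.
have [lt_n_2k | le_2k_n] := ltnP n k.*2.
  by rewrite !trinom_small //; lia.
set f := trinom n k; set m := n - k.*2.
have sub1 : n.+1 - k.*2 = m.+1 by rewrite subSn.
have sub2 : n.+2 - k.*2 = m.+2 by rewrite !subSn ?leqW.
have g1 : m.+1 * trinom n.+1 k = n.+1 * f by rewrite -trinom_succl sub1.
have g2 : m.+2 * trinom n.+2 k = n.+2 * trinom n.+1 k.
  by rewrite -trinom_succl sub2.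
have f1 : k.+1 ^ 2 * trinom n k.+1 = m * m.-1 * f by rewrite trinom_succr.
have f2 : k.+1 ^ 2 * trinom n.+1 k.+1 = n.+1 * m * f.
  by rewrite trinom_succr sub1 mulnAC g1 mulnAC.
have f3 : k.+1 ^ 2 * trinom n.+2 k.+1 = n.+2 * n.+1 * f.
  by rewrite trinom_succr sub2 mulnAC g2 -mulnA [_ * m.+1]mulnC g1 mulnA.
apply/eqP; rewrite -(eqn_pmul2l (expn_gt0 k.+1 2)); apply/eqP.
have -> : k.+1 ^ 2 * (n.+2 * trinom n.+2 k.+1 + n.+1 * trinom n k.+1) =
    n.+2 * (k.+1 ^ 2 * trinom n.+2 k.+1) + n.+1 * (k.+1 ^ 2 * trinom n k.+1).
  by ring.
have -> : k.+1 ^ 2 * ((2 * n + 3) * trinom n.+1 k.+1 + 4 * n.+1 * f) =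
    (2 * n + 3) * (k.+1 ^ 2 * trinom n.+1 k.+1) + 4 * n.+1 * k.+1 ^ 2 * f.
  by ring.
rewrite f1 f2 f3.
have def_n : n = k.*2 + m by rewrite subnKC.
rewrite def_n -!muln2; case: m {f1 f2 f3 g1 g2 sub1 sub2 def_n} => [|m] /=; ring.
Qed.

Lemma T_sum n K : n < K.*2 -> T n = \sum_(0 <= k < K) trinom n k.
Proof.
move=> lt_n_2K; rewrite /T (@big_cat_nat _ _ _ n./2.+1 0 K) //=; last first.
  by rewrite ltn_half_double.
rewrite [X in _ = _ + X]big1_seq ?addn0 // => k /andP[_].
rewrite mem_index_iota => /andP[lt_half_k _].
by rewrite trinom_small // -ltn_half_double.
Qed.

Lemma T_succ_sum n K : n < K.+1.*2 -> T n = 1 + \sum_(0 <= k < K) trinom n k.+1.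
Proof. by move/T_sum->; rewrite big_nat_recl // /trinom /= !bin0. Qed.

Lemma T_rec n : n.+2 * T n.+2 = (2 * n + 3) * T n.+1 + 3 * n.+1 * T n.
Proof.
set sum_shift := fun m => \sum_(0 <= k < n.+2) trinom m k.+1.
have T_shift m : m <= n.+2 -> T m = 1 + sum_shift m.
  by move=> le_m; apply: T_succ_sum; lia.
have key : n.+2 * sum_shift n.+2 + n.+1 * sum_shift n =
           (2 * n + 3) * sum_shift n.+1
           + 4 * n.+1 * \sum_(0 <= k < n.+2) trinom n k.
  rewrite /sum_shift !big_distrr -!big_split.
  by apply: eq_bigr => k _; apply: trinom_rec.
rewrite -(@T_sum n n.+2) in key; last by lia.
by rewrite !T_shift // in key *; lia.
Qed.

Lemma T_odd n : odd (T n).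
Proof.
rewrite (@T_succ_sum n n); last by lia.
rewrite oddD /= -dvdn2 dvdn_sum // => k _.
by rewrite /trinom bin_mid_double dvdn_mull ?dvdn_mulr.
Qed.

Lemma dvdn_fact_ffact m k : k`! %| m ^_ k.
Proof. by rewrite -bin_ffact dvdn_mull. Qed.

Lemma dvdn6_sqr_mul_sqr_sub1 m : 6 %| m ^ 2 * (m ^ 2 - 1).
Proof.
have -> : m ^ 2 * (m ^ 2 - 1) = m * m.+1 ^_ 3.
  by rewrite !ffactnS ffactn0 /=; case: m => [|m] //=; nia.
exact: dvdn_mull (dvdn_fact_ffact _ _).
Qed.

Definition sumT n := \sum_(0 <= k < n) k * (k + 1) * (8 * k + 9) * T k * T k.+1.

Local Open Scope ring_scope.

Section QuadraticForms.

Context {R : comPzRingType}.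
Implicit Types N a b c u v : R.

Definition sum_form N a b : R :=
  6 * (4 * N ^+ 2 + 20 * N - 21) * a * b - (2 * N - 5) ^+ 2 * a ^+ 2
  - 9 * (2 * N - 3) ^+ 2 * b ^+ 2.

Lemma sum_form_step {N a b c} :
  (N + 1) * c = (2 * N + 1) * a + 3 * N * b ->
  (N + 1) ^+ 2 * sum_form (N + 1) c a =
  N ^+ 2 * sum_form N a b + 24 * N * (N + 1) * (8 * N + 9) * a * c.
Proof.
move=> rec; apply/eqP; rewrite -subr_eq0; apply/eqP.
transitivity (((N + 1) * c - ((2 * N + 1) * a + 3 * N * b)) *
  ((16 * N ^+ 3 + 20 * N ^+ 2 - 36 * N + 9) * a
   - (12 * N ^+ 3 - 36 * N ^+ 2 + 27 * N) * b
   - (4 * N ^+ 3 - 8 * N ^+ 2 - 3 * N + 9) * c)).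
  by rewrite /sum_form; ring.
by rewrite rec subrr mul0r.
Qed.

Definition reduced_form N u v : R :=
  - 9 * (2 * N - 1) * (N - 1) * u ^+ 2 + 6 * (2 * N + 5) * (N - 1) * u * v
  - (2 * N - 29) * (N + 1) * v ^+ 2.

Lemma sum_form_factor {N a b u v} :
  a - b = 2 * (N - 1) * u -> a + 3 * b = 2 * (N + 1) * v ->
  2 * sum_form N a b = 4 * (N ^+ 2 - 1) * reduced_form N u v.
Proof.
move=> eq_sub eq_add.
have -> : 2 * sum_form N a b =
    - 9 * (2 * N - 1) * (N + 1) * (a - b) ^+ 2
    + 6 * (2 * N + 5) * (N - 1) * (a - b) * (a + 3 * b)
    - (2 * N - 29) * (N - 1) * (a + 3 * b) ^+ 2.
  by rewrite /sum_form; ring.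
by rewrite eq_sub eq_add /reduced_form; ring.
Qed.

End QuadraticForms.

Lemma reduced_form_even (N u v : int) :
  (2 %| (N + 1) * v - (N - 1) * u)%Z -> (2 %| reduced_form N u v)%Z.
Proof.
move=> even_diff.
have -> : reduced_form N u v = (v - u) * ((N + 1) * v - (N - 1) * u)
    + 2 * (N * u * v - (N - 1) * (9 * N - 4) * u ^+ 2
           + 3 * (2 * N + 5) * (N - 1) * u * v - (N - 14) * (N + 1) * v ^+ 2).
  by rewrite /reduced_form; ring.
by apply: rpredD; [apply: dvdz_mull | apply: dvdz_mulr; apply: dvdzz].
Qed.

Local Notation t k := (Posz (T k)).

Lemma t_rec k : (k%:Z + 1) * t k.+1 = (2 * k%:Z + 1) * t k + 3 * k%:Z * t k.-1.
Proof.
case: k => [|k] /=; first by rewrite /T !big_nat1.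
by have := T_rec k; lia.
Qed.

(* For k > 0, w k is the Motzkin number M(k-1); the division is exact because
   T is odd. *)
Definition w k : int := ((2 * t k + 3 * t k.-1 - t k.+1) %/ 2)%Z.

Lemma t_oddE k : t k = 2 * ((T k)./2)%:Z + 1.
Proof. by have := odd_double_half (T k); rewrite T_odd; lia. Qed.

Lemma w_double k : 2 * w k = 2 * t k + 3 * t k.-1 - t k.+1.
Proof.
rewrite mulrC divzK //; apply/dvdzP.
exists (t k + 3 * ((T k.-1)./2)%:Z - ((T k.+1)./2)%:Z + 1).
by rewrite (t_oddE k.-1) (t_oddE k.+1); ring.
Qed.

Lemma t_succ_sub k : t k.+1 - t k = 2 * k%:Z * w k.
Proof. by rewrite mulrAC w_double; have := t_rec k; lia. Qed.

Lemma t_add_pred k : t k + 3 * t k.-1 = 2 * (k%:Z + 1) * w k.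
Proof. by rewrite mulrAC w_double; have := t_rec k; lia. Qed.

Lemma w_succ k : (k%:Z + 2) * w k.+1 - k%:Z * w k = 2 * t k.
Proof. by have := t_add_pred k.+1; have := t_succ_sub k; rewrite /=; lia. Qed.

Lemma sumT_closed n : 24 * (sumT n)%:Z = n%:Z ^+ 2 * sum_form n%:Z (t n) (t n.-1).
Proof.
elim: n => [|n IH]; first by rewrite /sumT big_geq //; ring.
rewrite /sumT big_nat_recr //= -/(sumT n) PoszD mulrDr IH.
have -> : n.+1%:Z = n%:Z + 1 by rewrite intS addrC.
by rewrite (sum_form_step (t_rec n)) !PoszM; lia.
Qed.

Lemma sumT_mul6 n :
  exists h : int, 6 * (sumT n)%:Z = n%:Z ^+ 2 * (n%:Z ^+ 2 - 1) * h.
Proof.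
case: n => [|n]; first by exists 0; rewrite /sumT big_geq.
set N := n.+1%:Z.
have diff_eq : t n.+1 - t n = 2 * (N - 1) * w n by rewrite t_succ_sub; lia.
have sum_eq : t n.+1 + 3 * t n = 2 * (N + 1) * w n.+1.
  by rewrite t_add_pred /N; lia.
have [h red_eq] : exists h, reduced_form N (w n) (w n.+1) = h * 2.
  apply/dvdzP/reduced_form_even/dvdzP; exists (t n).
  by have := w_succ n; lia.
exists h; apply: (@mulfI _ 8) => //.
rewrite mulrA (_ : 8 * 6 = 2 * 24) // -mulrA sumT_closed mulrCA.
by rewrite (sum_form_factor diff_eq sum_eq) red_eq; ring.
Qed.

Local Close Scope ring_scope.

Theorem theorem1p2 (n : nat) : 0 < n ->
  (n ^ 2 * (n ^ 2 - 1)) %/ 6 %|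
    \sum_(0 <= k < n) k * (k + 1) * (8 * k + 9) * T k * T k.+1.
Proof.
move=> _; rewrite -/(sumT n).
have [h mul6] := sumT_mul6 n.
have /divnK D6 := dvdn6_sqr_mul_sqr_sub1 n.
set D := _ %/ 6 in D6 *.
have D6z : (n%:Z ^+ 2 * (n%:Z ^+ 2 - 1) = 6 * D%:Z)%R by rewrite !expr2; nia.
change (D%:Z %| (sumT n)%:Z)%Z; apply/dvdzP; exists h.
by apply: (@mulfI _ 6) => //; rewrite mul6 D6z; ring.
Qed.
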